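(* Let $n\geqslant 1$, let $A=\{g,e_1,\ldots,e_n\}$ and let $R$ be the set of monoid relations on $A$: (R1) $g^n=1$; (R2) $e_i^2=e_i$ for $1\leqslant i\leqslant n$; (R3) $e_ie_j=e_je_i$ for $1\leqslant i<j\leqslant n$; (R4) $ge_1=e_ng$ and $ge_{i+1}=e_ig$ for $1\leqslant i\leqslant n-1$; (R5) $ge_1e_2\cdots e_n=e_1e_2\cdots e_n$. Then $\langle A\mid R\rangle$ is a monoid presentation of $\mathcal{CI}_n$ (with respect to the map sending the letter $g$ to the permutation $g$ and each letter $e_i$ to the partial identity $e_i$). It has $n+1$ generators and $\frac12(n^2+3n+4)$ relations.
   Context: Let $\Omega_n=\{1,\ldots,n\}$, $\mathcal{I}_n$ the symmetric inverse monoid on $\Omega_n$ (maps on the right, composed left to right). $g$ is the permutation $ig=i+1$ ($1\leqslant i\leqslant n-1$), $ng=1$; $\mathcal{C}_n=\{1,g,\ldots,g^{n-1}\}$; $\mathcal{CI}_n=\{\alpha\in\mathcal{I}_n\mid \alpha=\sigma|_{\mathrm{Dom}(\alpha)}\text{ for some }\sigma\in\mathcal{C}_n\}$; $e_i$ is the partial identity on $\Omega_n\setminus\{i\}$. A presentation $\langle A\mid R\rangle$ defines a monoid $M$ via a map $\phi:A\to M$ if $\phi$ is injective, $A\phi$ generates $M$, and the induced homomorphism $A^*\to M$ has kernel equal to the smallest congruence on the free monoid $A^*$ containing $R$. *)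

From mathcomp Require Import all_boot.
Set Implicit Arguments. Unset Strict Implicit. Unset Printing Implicit Defensive.

(* Omega_n = {1,...,n} is modelled by 'I_n = {0,...,n-1} (point i <-> ordinal i-1). *)

(* Partial maps on Omega_n; maps act on the right: x(ab) = (xa)b. *)
Definition pmap (n : nat) := {ffun 'I_n -> option 'I_n}.

Definition pcomp n (a b : pmap n) : pmap n := [ffun x => obind b (a x)].
Definition pid n : pmap n := [ffun x => Some x].

Definition is_pinj n (a : pmap n) : Prop :=
  forall x y : 'I_n, a x <> None -> a x = a y -> x = y.

Definition gfun n (x : 'I_n) : 'I_n := ordS x.
Definition gmap n : pmap n := [ffun x => Some (gfun x)].

(* C_n = {1, g, ..., g^(n-1)}; CI_n = restrictions of elements of C_n *)
Definition in_CI n (a : pmap n) : Prop :=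
  is_pinj a /\
  exists k, k < n /\ forall x : 'I_n, a x <> None -> a x = Some (iter k (@gfun n) x).

Definition emap n (i : 'I_n) : pmap n := [ffun x => if x == i then None else Some x].

(* Alphabet A = {g, e_1, ..., e_n}: None is the letter g, Some i is the letter e_(i+1). *)
Definition letter (n : nat) := option 'I_n.
Notation lg := (@None _).
Notation le i := (Some i).

Definition phi n (a : letter n) : pmap n :=
  match a with None => gmap n | Some i => emap i end.

Definition evalw n (w : seq (letter n)) : pmap n :=
  foldl (fun acc a => pcomp acc (phi a)) (pid n) w.

(* The relations R1 - R5 (R4 uniformly as g e_(i+1) = e_i g with indices mod n,
   i.e. g e_1 = e_n g and g e_(i+1) = e_i g for 1 <= i <= n-1). *)
Definition rels (n : nat) : seq (seq (letter n) * seq (letter n)) :=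
  [:: (nseq n lg, [::])]
  ++ [seq ([:: le i; le i], [:: le i]) | i <- enum 'I_n]
  ++ [seq ([:: le i; le j], [:: le j; le i])
       | i : 'I_n <- enum 'I_n, j : 'I_n <- filter (fun j : 'I_n => i < j) (enum 'I_n)]
  ++ [seq ([:: lg; le (ordS i)], [:: le i; lg]) | i <- enum 'I_n]
  ++ [:: (lg :: [seq le i | i <- enum 'I_n], [seq le i | i <- enum 'I_n])].

Definition is_congruence (T : Type) (rel : seq T -> seq T -> Prop) : Prop :=
  [/\ forall u, rel u u,
      forall u v, rel u v -> rel v u,
      forall u v w, rel u v -> rel v w -> rel u w
    & forall u v x y, rel u v -> rel (x ++ u ++ y) (x ++ v ++ y)].

Definition congr_gen (T : eqType) (R : seq (seq T * seq T)) (u v : seq T) : Prop :=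
  forall rel, is_congruence rel -> (forall l r, (l, r) \in R -> rel l r) -> rel u v.

Definition presents_CI n (R : seq (seq (letter n) * seq (letter n))) : Prop :=
  [/\ injective (@phi n),
      (forall w : seq (letter n), in_CI (evalw w)),
      (forall a : pmap n, in_CI a -> exists w : seq (letter n), evalw w = a)
    & forall u v, evalw u = evalw v <-> congr_gen R u v].

From mathcomp Require Import all_boot zify.
Set Implicit Arguments. Unset Strict Implicit. Unset Printing Implicit Defensive.

(* Using R2-R4, every word is congruent to a normal form e_S g^k with S a set
   of points and k < n: the letters e_i are moved to the left past the g's
   (R4 shifts their index), then sorted and deduplicated (R3, R2), and R1
   reduces the exponent of g.  The word e_S g^k evaluates to the restriction
   of g^k to the complement of S; this determines S, and also k unless S is
   everything, in which case R5 absorbs every g. *)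

Section GeneratedCongruence.
Variables (T : eqType) (R : seq (seq T * seq T)).

Lemma congr_gen_refl u : congr_gen R u u.
Proof. by move=> rel [rrefl _ _ _]. Qed.

Lemma congr_gen_sym u v : congr_gen R u v -> congr_gen R v u.
Proof. move=> uv rel crel relR; have [_ rsym _ _] := crel; exact: rsym (uv _ crel relR). Qed.

Lemma congr_gen_trans u v w :
  congr_gen R u v -> congr_gen R v w -> congr_gen R u w.
Proof.
move=> uv vw rel crel relR; have [_ _ rtrans _] := crel.
exact: rtrans (uv _ crel relR) (vw _ crel relR).
Qed.

Lemma congr_gen_rel l r : (l, r) \in R -> congr_gen R l r.
Proof. by move=> lr rel _; apply. Qed.

Lemma congr_gen_ctx u v x y :
  congr_gen R u v -> congr_gen R (x ++ u ++ y) (x ++ v ++ y).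
Proof. move=> uv rel crel relR; have [_ _ _ rctx] := crel; exact: rctx (uv _ crel relR). Qed.

Lemma congr_gen_catl x u v : congr_gen R u v -> congr_gen R (x ++ u) (x ++ v).
Proof. by move=> /(congr_gen_ctx x [::]); rewrite !cats0. Qed.

Lemma congr_gen_catr y u v : congr_gen R u v -> congr_gen R (u ++ y) (v ++ y).
Proof. exact: congr_gen_ctx [::] y. Qed.

Lemma congr_gen_hom_eq (M : Type) (op : M -> M -> M) (f : seq T -> M) :
  (forall u v, f (u ++ v) = op (f u) (f v)) ->
  (forall l r, (l, r) \in R -> f l = f r) ->
  forall u v, congr_gen R u v -> f u = f v.
Proof.
move=> fcat fR u v uv; apply: (uv (fun u v => f u = f v)) => //.
by split=> // [? ? ? -> -> | ? ? ? ? e] //; rewrite !fcat e.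
Qed.

End GeneratedCongruence.

Section PartialMaps.
Variable n : nat.
Implicit Types (a b c : pmap n) (u v w : seq (letter n)).

Lemma pcompA a b c : pcomp (pcomp a b) c = pcomp a (pcomp b c).
Proof. by apply/ffunP => x; rewrite !ffunE; case: (a x) => //= y; rewrite ffunE. Qed.

Lemma pcomp_idl a : pcomp (pid n) a = a.
Proof. by apply/ffunP => x; rewrite !ffunE. Qed.

Lemma pcomp_idr a : pcomp a (pid n) = a.
Proof. by apply/ffunP => x; rewrite !ffunE; case: (a x) => //= y; rewrite ffunE. Qed.

Lemma foldl_pcomp_phi a w :
  foldl (fun acc l => pcomp acc (phi l)) a w = pcomp a (evalw w).
Proof.
elim: w a => [|l w IHw] a /=; first by rewrite pcomp_idr.
by rewrite /evalw /= !IHw pcomp_idl pcompA.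
Qed.

Lemma evalw_cat u v : evalw (u ++ v) = pcomp (evalw u) (evalw v).
Proof. by rewrite /evalw foldl_cat foldl_pcomp_phi. Qed.

Lemma evalw_cons (l : letter n) w : evalw (l :: w) = pcomp (phi l) (evalw w).
Proof. by rewrite -cat1s evalw_cat /evalw /= pcomp_idl. Qed.

Definition eword (s : seq 'I_n) : seq (letter n) := [seq le i | i <- s].

Lemma evalw_eword (s : seq 'I_n) :
  evalw (eword s) = [ffun x => if x \in s then None else Some x].
Proof.
elim: s => [|i s IHs]; first by apply/ffunP => x; rewrite !ffunE.
rewrite /eword map_cons evalw_cons -/(eword s) IHs; apply/ffunP => x.
by rewrite !ffunE in_cons; case: (x == i) => //=; rewrite ffunE.
Qed.

Lemma evalw_nseq_g k : evalw (nseq k lg) = [ffun x => Some (iter k (@gfun n) x)].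
Proof.
elim: k => [|k IHk]; first by apply/ffunP => x; rewrite !ffunE.
by rewrite [nseq _ _]/= evalw_cons IHk; apply/ffunP => x; rewrite !ffunE /= ffunE -iterSr.
Qed.

Lemma val_iter_gfun k (x : 'I_n) : val (iter k (@gfun n) x) = (x + k) %% n.
Proof.
elim: k => [|k IHk] /=; first by rewrite addn0 modn_small.
by rewrite IHk -addn1 modnDml addn1 addnS.
Qed.

Lemma iter_gfun_order (x : 'I_n) : iter n (@gfun n) x = x.
Proof. by apply: val_inj; rewrite val_iter_gfun modnDr modn_small. Qed.

Lemma iter_gfun_inj k : injective (iter k (@gfun n)).
Proof.
apply: (@can_inj _ _ _ (iter k (@ord_pred n))); elim: k => // k IHk x.
by rewrite iterSr iterS ordSK IHk.
Qed.

Lemma phi_inj : injective (@phi n).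
Proof.
have eval_at x a b : a = b -> a x = b x by move->.
case=> [i|] [j|] //=.
- by move/(eval_at i); rewrite !ffunE eqxx; case: eqVneq => // ->.
- by move/(eval_at i); rewrite !ffunE eqxx.
- by move/(eval_at j); rewrite !ffunE eqxx.
Qed.

Lemma evalw_rels l r : (l, r) \in rels n -> evalw l = evalw r.
Proof.
have eword_eq s t : s =i t -> evalw (eword s) = evalw (eword t).
  by move=> st; rewrite !evalw_eword; apply/ffunP => x; rewrite !ffunE st.
rewrite !mem_cat; case/orP=> [|/orP [|/orP [|/orP []]]].
- rewrite mem_seq1 => /eqP [-> ->]; rewrite evalw_nseq_g.
  by apply/ffunP => x; rewrite !ffunE iter_gfun_order.
- by case/mapP => i _ [-> ->]; apply: (eword_eq [:: i; i] [:: i]) => x; rewrite !inE orbb.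
- case/allpairsPdep => i [j [_ _ [-> ->]]].
  by apply: (eword_eq [:: i; j] [:: j; i]) => x; rewrite !inE orbC.
- case/mapP => i _ [-> ->]; rewrite !evalw_cons /evalw /= !pcomp_idr.
  apply/ffunP => x; rewrite !ffunE /= !ffunE /gfun (inj_eq (@ordS_inj n)).
  by case: (x == i) => //=; rewrite ffunE.
- rewrite mem_seq1 => /eqP [-> ->]; rewrite evalw_cons -/(eword _) evalw_eword.
  by apply/ffunP => x; rewrite !ffunE /= ffunE !mem_enum.
Qed.

Lemma evalw_congr u v : congr_gen (rels n) u v -> evalw u = evalw v.
Proof. exact: (@congr_gen_hom_eq _ _ _ (@pcomp n) (@evalw n) evalw_cat evalw_rels). Qed.

End PartialMaps.

Section Rewriting.
Variable n : nat.
Local Notation cg := (congr_gen (rels n)).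

Lemma rels_R1 : (nseq n lg, [::]) \in rels n.
Proof. by rewrite mem_cat mem_seq1 eqxx. Qed.

Lemma rels_R2 (i : 'I_n) : ([:: le i; le i], [:: le i]) \in rels n.
Proof.
by rewrite !mem_cat (map_f (fun i : 'I_n => ([:: le i; le i], [:: le i]))) ?mem_enum ?orbT.
Qed.

Lemma rels_R3 (i j : 'I_n) : i < j -> ([:: le i; le j], [:: le j; le i]) \in rels n.
Proof.
move=> ij; have R3ij : ([:: le i; le j], [:: le j; le i]) \in
    [seq ([:: le i; le j], [:: le j; le i])
      | i : 'I_n <- enum 'I_n, j : 'I_n <- [seq j : 'I_n <- enum 'I_n | i < j]].
  apply/allpairsPdep; exists i, j; split=> //; first by rewrite mem_enum.
  by rewrite mem_filter ij mem_enum.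
by rewrite !mem_cat R3ij !orbT.
Qed.

Lemma rels_R4 (i : 'I_n) : ([:: lg; le (ordS i)], [:: le i; lg]) \in rels n.
Proof.
by rewrite !mem_cat (map_f (fun i : 'I_n => ([:: lg; le (ordS i)], [:: le i; lg]))) ?mem_enum ?orbT.
Qed.

Lemma rels_R5 : (lg :: eword (enum 'I_n), eword (enum 'I_n)) \in rels n.
Proof. by rewrite /rels !catA mem_cat mem_seq1 eqxx orbT. Qed.

Lemma e_comm (i j : 'I_n) : cg [:: le i; le j] [:: le j; le i].
Proof.
case: (ltngtP i j) => [ij | ji | /val_inj ->].
- exact: congr_gen_rel (rels_R3 ij).
- exact: congr_gen_sym (congr_gen_rel (rels_R3 ji)).
- exact: congr_gen_refl.
Qed.

Lemma eword_rcons (s : seq 'I_n) i : cg (eword s ++ [:: le i]) (le i :: eword s).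
Proof.
elim: s => [|j s IHs] /=; first exact: congr_gen_refl.
apply: congr_gen_trans (congr_gen_catl [:: le j] IHs) _.
by have := congr_gen_catr (eword s) (e_comm j i).
Qed.

Definition eset (S : {set 'I_n}) : seq (letter n) := eword [seq i <- enum 'I_n | i \in S].

(* generalised from [enum 'I_n] to any duplicate-free list, for the induction *)
Lemma eword_filter_rcons (S : {set 'I_n}) (s : seq 'I_n) i : uniq s -> i \in s ->
  cg (eword [seq j <- s | j \in S] ++ [:: le i]) (eword [seq j <- s | j \in i |: S]).
Proof.
elim: s => [|j s IHs] //= /andP [js us]; rewrite in_cons !inE.
case: (eqVneq i j) => [ij _ | ij /= i_s]; last first.
  case: (j \in S) => /=; last exact: IHs.
  by have := congr_gen_catl [:: le j] (IHs us i_s).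
subst j; have -> : [seq k <- s | k \in i |: S] = [seq k <- s | k \in S].
  apply: eq_in_filter => k ks; rewrite !inE.
  by case: eqVneq => // ki; rewrite -ki ks in js.
case: (i \in S) => /=; last exact: eword_rcons.
apply: congr_gen_trans (congr_gen_catl [:: le i] (eword_rcons _ i)) _.
by have := congr_gen_catr (eword [seq k <- s | k \in S]) (congr_gen_rel (rels_R2 i)).
Qed.

Lemma eset_rcons (S : {set 'I_n}) i : cg (eset S ++ [:: le i]) (eset (i |: S)).
Proof. by apply: eword_filter_rcons; rewrite ?enum_uniq ?mem_enum. Qed.

Lemma eset_cat_eword (S : {set 'I_n}) s : cg (eset S ++ eword s) (eset (S :|: [set x in s])).
Proof.
elim: s S => [|i s IHs] S /=.
  rewrite cats0 (_ : S :|: _ = S); first exact: congr_gen_refl.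
  by apply/setP=> y; rewrite !inE orbF.
rewrite -cat1s catA; apply: congr_gen_trans (congr_gen_catr _ (eset_rcons S i)) _.
rewrite (_ : S :|: _ = (i |: S) :|: [set x in s]); first exact: IHs.
by apply/setP=> y; rewrite !inE orbCA orbA.
Qed.

Lemma eset0 : eset set0 = [::].
Proof.
rewrite /eset (_ : filter _ _ = [::]) // -(filter_pred0 (enum 'I_n)).
by apply: eq_filter => x; rewrite inE.
Qed.

Lemma esetT : eset [set: 'I_n] = eword (enum 'I_n).
Proof.
rewrite /eset (_ : filter _ _ = enum 'I_n) // -[RHS]filter_predT.
by apply: eq_filter => x; rewrite inE.
Qed.

Lemma eword_eset s : cg (eword s) (eset [set x in s]).
Proof. by have := eset_cat_eword set0 s; rewrite eset0 set0U. Qed.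

Lemma g_eword (s : seq 'I_n) : cg (lg :: eword s) (eword (map (@ord_pred n) s) ++ [:: lg]).
Proof.
elim: s => [|j s IHs] /=; first exact: congr_gen_refl.
have gej : cg [:: lg; le j] [:: le (ord_pred j); lg].
  by have := congr_gen_rel (rels_R4 (ord_pred j)); rewrite ord_predK.
apply: congr_gen_trans (congr_gen_catr (eword s) gej) _.
by have := congr_gen_catl [:: le (ord_pred j)] IHs.
Qed.

Lemma gpow_e k (i : 'I_n) :
  cg (nseq k lg ++ [:: le i]) (le (iter k (@ord_pred n) i) :: nseq k lg).
Proof.
elim: k => [|k IHk] /=; first exact: congr_gen_refl.
apply: congr_gen_trans (congr_gen_catl [:: lg] IHk) _.
by have := g_eword [:: iter k (@ord_pred n) i]; apply: congr_gen_catr.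
Qed.

Lemma esetT_g : cg (eset [set: 'I_n] ++ [:: lg]) (eset [set: 'I_n]).
Proof.
have predS : eword (enum 'I_n) = eword (map (@ord_pred n) (map (@ordS n) (enum 'I_n))).
  by rewrite -map_comp (eq_map (@ordSK n)) map_id.
have imS : [set x in map (@ordS n) (enum 'I_n)] = [set: 'I_n].
  apply/setP=> y; rewrite !inE; apply/mapP; exists (ord_pred y); rewrite ?mem_enum //.
  by rewrite ord_predK.
rewrite esetT predS; apply: congr_gen_trans (congr_gen_sym (g_eword _)) _.
apply: congr_gen_trans (congr_gen_catl [:: lg] (eword_eset _)) _.
rewrite imS esetT -predS; exact: congr_gen_rel rels_R5.
Qed.

Definition nf (S : {set 'I_n}) k := eset S ++ nseq k lg.

Definition nf_map (S : {set 'I_n}) k : pmap n :=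
  [ffun x => if x \in S then None else Some (iter k (@gfun n) x)].

Lemma evalw_nf S k : evalw (nf S k) = nf_map S k.
Proof.
rewrite /nf evalw_cat evalw_eword evalw_nseq_g; apply/ffunP => x.
by rewrite !ffunE mem_filter mem_enum andbT; case: (x \in S) => //=; rewrite ffunE.
Qed.

Lemma nf_exists w : 0 < n -> exists S k, k < n /\ cg w (nf S k).
Proof.
move=> n_gt0; elim/last_ind: w => [|w l [S [k [lt_kn IHw]]]].
  by exists set0, 0; rewrite /nf eset0; split; last exact: congr_gen_refl.
rewrite -cats1; have {}IHw := congr_gen_catr [:: l] IHw.
case: l IHw => [i|] IHw.
- exists (iter k (@ord_pred n) i |: S), k; split => //.
  apply: congr_gen_trans IHw _; rewrite /nf -catA.
  apply: congr_gen_trans (congr_gen_catl _ (gpow_e k i)) _.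
  by rewrite -cat1s catA; apply: congr_gen_catr (eset_rcons _ _).
- rewrite /nf -catA -[[:: lg]]/(nseq 1 lg) -nseqD addn1 in IHw.
  case: (ltnP k.+1 n) => [lt_k1n | ge_k1n]; first by exists S, k.+1.
  exists S, 0; split => //; apply: congr_gen_trans IHw _.
  rewrite (_ : k.+1 = n); last by apply/eqP; rewrite eqn_leq lt_kn.
  by have := congr_gen_catl (eset S) (congr_gen_rel rels_R1); rewrite /nf cats0.
Qed.

Lemma nfT_g k : cg (nf [set: 'I_n] k) (eset [set: 'I_n]).
Proof.
rewrite /nf; elim: k => [|k IHk] /=; first by rewrite cats0; exact: congr_gen_refl.
rewrite -cat1s catA; exact: congr_gen_trans (congr_gen_catr _ esetT_g) IHk.
Qed.

Lemma nf_map_congr S1 S2 k1 k2 : k1 < n -> k2 < n ->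
  nf_map S1 k1 = nf_map S2 k2 -> cg (nf S1 k1) (nf S2 k2).
Proof.
move=> lt_k1n lt_k2n e.
have eval_at x : nf_map S1 k1 x = nf_map S2 k2 x by rewrite e.
have eS : S1 = S2.
  by apply/setP=> x; have := eval_at x; rewrite !ffunE; do 2 case: (x \in _).
subst S2.
case: (pickP [pred x | x \notin S1]) => [x /= xS1 | S1T]; last first.
  rewrite (_ : S1 = setT); last by apply/setP=> y; rewrite inE; apply/negbFE/S1T.
  exact: congr_gen_trans (nfT_g k1) (congr_gen_sym (nfT_g k2)).
have := eval_at x; rewrite !ffunE (negbTE xS1) => -[] /(congr1 val).
rewrite !val_iter_gfun => /eqP; rewrite eqn_modDl !modn_small // => /eqP ->.
exact: congr_gen_refl.
Qed.

End Rewriting.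

Lemma in_CI_nf_map n (S : {set 'I_n}) k : k < n -> in_CI (nf_map S k).
Proof.
move=> lt_kn; split; last by exists k; split=> // x; rewrite ffunE; case: (x \in S).
move=> x y; rewrite !ffunE; case: (x \in S) => //; case: (y \in S) => // _ [].
exact: iter_gfun_inj.
Qed.

Lemma in_CI_nf_mapE n (a : pmap n) :
  in_CI a -> exists2 k, k < n & a = nf_map [set x | a x == None] k.
Proof.
move=> [_ [k [lt_kn ak]]]; exists k => //; apply/ffunP => x.
by rewrite !ffunE inE; case: eqP => [-> | /ak].
Qed.

Lemma evalw_nf_exists n (w : seq (letter n)) : 0 < n ->
  exists S k, [/\ k < n, congr_gen (rels n) w (nf S k) & evalw w = nf_map S k].
Proof.
move=> n_gt0; have [S [k [lt_kn wS]]] := nf_exists w n_gt0.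
by exists S, k; rewrite (evalw_congr wS) evalw_nf.
Qed.

Lemma count_ltn_iota m b : count (fun j => m < j) (iota 0 b) = b - m.+1.
Proof.
elim: b => [|b IHb] //; rewrite -[b.+1]addn1 iotaD count_cat IHb /= add0n addn0.
by case: (ltnP m b) => ?; lia.
Qed.

Lemma size_rels n : 1 <= n -> size (rels n) = (n ^ 2 + 3 * n + 4) %/ 2.
Proof.
move=> n_gt0.
rewrite /rels !size_cat !size_map size_allpairs_dep -enumT size_enum_ord -?enumT.
have -> : sumn [seq size [seq j : 'I_n <- enum 'I_n | i < j] | i : 'I_n <- enum 'I_n]
          = \sum_(i < n) i.
  rewrite sumnE big_map big_enum /= (reindex_inj rev_ord_inj) /=.
  apply: eq_bigr => i _; rewrite size_filter.
  rewrite -(count_map val (fun j => n - i.+1 < j)) val_enum_ord count_ltn_iota.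
  by have := ltn_ord i; lia.
rewrite -(big_mkord xpredT id) bin2_sum bin2 -divn2.
have -> : n ^ 2 = n * n.-1 + n by case: n n_gt0 => // m _; lia.
by move: (n * n.-1) => m /=; lia.
Qed.

Theorem theorem2p6 (n : nat) : 1 <= n ->
  [/\ presents_CI (rels n),
      #|{: letter n}| = n.+1
    & size (rels n) = (n ^ 2 + 3 * n + 4) %/ 2].
Proof.
move=> n_gt0; split; [split | by rewrite card_option card_ord | exact: size_rels].
- exact: phi_inj.
- by move=> w; have [S [k [lt_kn _ ->]]] := evalw_nf_exists w n_gt0; apply: in_CI_nf_map.
- move=> a /in_CI_nf_mapE [k lt_kn ->].
  by exists (nf [set x | a x == None] k); rewrite evalw_nf.
- move=> u v; split; last exact: evalw_congr.
  have [S1 [k1 [lt_k1n uS1 ->]]] := evalw_nf_exists u n_gt0.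
  have [S2 [k2 [lt_k2n vS2 ->]]] := evalw_nf_exists v n_gt0.
  move=> /(nf_map_congr lt_k1n lt_k2n) nf12.
  exact: congr_gen_trans uS1 (congr_gen_trans nf12 (congr_gen_sym vS2)).
Qed.
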